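(* Let $I$ be a resident-minimal and hospital-complete instance and $J$ a simple extension of $I$. Let $P=\mathrm{prop}(J)\setminus\mathrm{prop}(I)$ and $X=\mathrm{rej}(J)\setminus\mathrm{rej}(I)$. Then: (P1) $P\cap\mathrm{prop}(I)=\emptyset$; (P2) for each $r\in R$ there is at most one $h\in H$ with $(r,h)\in P$; (P3) $X\subseteq\mathrm{tent}(I)$; (P4) $\mathrm{res}\,P\cap\mathrm{res}\,\mathrm{tent}(I)\subseteq\mathrm{res}\,X$; (P5) for each $h\in H$, $|\mathrm{res}_h(P\cup(\mathrm{tent}(I)\setminus X))|\le q_h$, and if $\mathrm{res}_h X$ is non-empty then $|\mathrm{res}_h(P\cup(\mathrm{tent}(I)\setminus X))|=q_h$; (P6) for each $h\in H$, each member of $\mathrm{res}_h(P\cup(\mathrm{tent}(I)\setminus X))$ precedes all members of $\mathrm{res}_h X$ in the preference list of $h$ in $I$.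
   Context: An instance $I$ consists of finite disjoint sets $R$ (residents) and $H$ (hospitals), a positive integer quota $q_h$ for each $h\in H$, for each $r\in R$ a preference list of $r$ (a sequence of distinct members of $H$, not necessarily all), and for each $h\in H$ a preference list of $h$ (a sequence of distinct members of $R$). A list is complete if it contains every member of the opposite side; an instance is hospital-complete if every hospital's list is complete. A match is a pair $(r,h)\in R\times H$. For a set $M$ of matches, $\mathrm{res}_h M=\{r:(r,h)\in M\}$, $\mathrm{res}\,M=\{r:(r,h)\in M\text{ for some }h\}$. $J$ is an extension of $I$ (same $R,H$, quotas) if every list of $J$ has the corresponding list of $I$ as a prefix. An event is $(r,h)^+$ (proposal) or $(r,h)^-$ (rejection). For an event sequence $\sigma$, $\mathrm{prop}(\sigma)$, $\mathrm{rej}(\sigma)$ are the sets of matches proposed/rejected in $\sigma$ and $\mathrm{tent}(\sigma)=\mathrm{prop}(\sigma)\setminus\mathrm{rej}(\sigma)$. A match $(r,h)\in M$ is ousted from $M$ in $I$ if the list of $h$ in $I$ contains at least $q_h$ residents of $\mathrm{res}_h M$ and either $r$ is not on it or $r$ is preceded on it by at least $q_h$ residents of $\mathrm{res}_h M$. $I$-feasible sequences: the empty sequence is $I$-feasible; if $\sigma$ is $I$-feasible then $\sigma+(r,h)^+$ is $I$-feasible if $r\notin\mathrm{res}\,\mathrm{tent}(\sigma)$, $(r,h)\notin\mathrm{prop}(\sigma)$, $h$ is on the list of $r$ in $I$ and $(r,h')\in\mathrm{rej}(\sigma)$ for every $h'$ preceding $h$ on it; and $\sigma+(r,h)^-$ is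 $I$-feasible if $(r,h)$ is ousted from $\mathrm{prop}(\sigma)$ in $I$ and $(r,h)\notin\mathrm{rej}(\sigma)$. All maximal $I$-feasible sequences contain the same events; $\mathrm{prop}(I),\mathrm{rej}(I),\mathrm{tent}(I)$ denote $\mathrm{prop}(\sigma),\mathrm{rej}(\sigma),\mathrm{tent}(\sigma)$ for any maximal $I$-feasible $\sigma$. $I$ is resident-minimal if $\mathrm{prop}(I)$ equals the set of matches $(r,h)$ with $h$ on the list of $r$ in $I$. An extension $J$ of $I$ is simple if $(\mathrm{prop}(J)\setminus\mathrm{prop}(I))\cap(\mathrm{rej}(J)\setminus\mathrm{rej}(I))=\emptyset$. *)

From mathcomp Require Import all_boot.
Set Implicit Arguments. Unset Strict Implicit. Unset Printing Implicit Defensive.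

Section HR.
Variables (R H : finType).

(* An instance: quotas and preference lists (residents R, hospitals H are the
   finite types R and H, automatically disjoint). *)
Record instance := Instance {
  quota : H -> nat;
  prefR : R -> seq H;
  prefH : H -> seq R }.

Definition wf_instance (I : instance) : Prop :=
  (forall h, 0 < quota I h) /\
  (forall r, uniq (prefR I r)) /\ (forall h, uniq (prefH I h)).

Definition hospital_complete (I : instance) : Prop :=
  forall h r, r \in prefH I h.

Definition extension (I J : instance) : Prop :=
  (forall h, quota J h = quota I h) /\
  (forall r, prefix (prefR I r) (prefR J r)) /\
  (forall h, prefix (prefH I h) (prefH J h)).

Definition res_h (h : H) (M : {set R * H}) : {set R} := [set r | (r, h) \in M].
Definition res (M : {set R * H}) : {set R} := [set r | [exists h, (r, h) \in M]].

Inductive event := Propose of R & H | Reject of R & H.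

Definition prop (s : seq event) : {set R * H} :=
  [set x | has (fun e => if e is Propose r h then (r, h) == x else false) s].
Definition rej (s : seq event) : {set R * H} :=
  [set x | has (fun e => if e is Reject r h then (r, h) == x else false) s].
Definition tent (s : seq event) : {set R * H} := prop s :\: rej s.

Definition cnt_on (h : H) (M : {set R * H}) (L : seq R) : nat :=
  count (fun x => x \in res_h h M) L.

Definition ousted (I : instance) (M : {set R * H}) (r : R) (h : H) : bool :=
  let L := prefH I h in
  [&& (r, h) \in M,
      quota I h <= cnt_on h M L &
      (r \notin L) || (quota I h <= cnt_on h M (take (index r L) L))].

Definition can_propose (I : instance) (s : seq event) (r : R) (h : H) : bool :=
  let L := prefR I r in
  [&& r \notin res (tent s), (r, h) \notin prop s, h \in L &
      all (fun h' => (r, h') \in rej s) (take (index h L) L)].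

Definition can_reject (I : instance) (s : seq event) (r : R) (h : H) : bool :=
  ousted I (prop s) r h && ((r, h) \notin rej s).

Inductive feasible (I : instance) : seq event -> Prop :=
  | feas_nil : feasible I [::]
  | feas_prop s r h : feasible I s -> can_propose I s r h ->
      feasible I (rcons s (Propose r h))
  | feas_rej s r h : feasible I s -> can_reject I s r h ->
      feasible I (rcons s (Reject r h)).

Definition maximal_feasible (I : instance) (s : seq event) : Prop :=
  feasible I s /\ forall e, ~ feasible I (rcons s e).

(* I is resident-minimal, where sI is a maximal I-feasible sequence
   (so prop(I) = prop sI). *)
Definition resident_minimal (I : instance) (sI : seq event) : Prop :=
  forall r h, ((r, h) \in prop sI) = (h \in prefR I r).

Definition simple_ext (I J : instance) (sI sJ : seq event) : Prop :=
  extension I J /\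
  (prop sJ :\: prop sI) :&: (rej sJ :\: rej sI) = set0.

Definition precedes (L : seq R) (x y : R) : bool :=
  (x \in L) && (index x L < index y L).

End HR.

From mathcomp Require Import all_boot.
Set Implicit Arguments. Unset Strict Implicit. Unset Printing Implicit Defensive.

(* Simplicity together with the monotonicity of runs (a maximal J-run replays
   every I-feasible run) forces every rejection of J to be of a pair already
   proposed in I; hence P :|: (tent I :\: X) is exactly tent J.  Complete
   hospital lists cannot grow, so each hospital ranks residents identically in
   I and J, and in a maximal run it keeps precisely the first [quota] of its
   proposers and rejects the others; (P2), (P5) and (P6) are these facts about
   tent J.  For (P4), a new proposal of r lies beyond r's whole list in I, so
   every hospital of that list has rejected r in J. *)

Lemma leq_count_take (T : Type) (p : pred T) (s : seq T) i j :
  i <= j -> count p (take i s) <= count p (take j s).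
Proof. by move=> le_ij; rewrite -(subnKC le_ij) takeD count_cat leq_addr. Qed.

Lemma count_take_index (T : eqType) (p : pred T) (s : seq T) x :
  p x -> count p (take (index x s) s) = index x (filter p s).
Proof.
move=> px; elim: s => //= y s IHs.
have [->|ne_yx] := eqVneq y x; first by rewrite px /= eqxx.
by rewrite /=; case: (p y); rewrite /= ?(negbTE ne_yx) IHs.
Qed.

Lemma take_index_cat (T : eqType) (s1 s2 : seq T) x : x \in s1 ->
  take (index x (s1 ++ s2)) (s1 ++ s2) = take (index x s1) s1.
Proof. by move=> xs1; rewrite index_cat xs1 take_cat index_mem xs1. Qed.

Lemma complete_prefix_eq (T : finType) (s1 s2 : seq T) :
  (forall x, x \in s1) -> prefix s1 s2 -> uniq s2 -> s2 = s1.
Proof.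
move=> s1T /prefixP [[|y s3] ->]; first by rewrite cats0.
by rewrite cat_uniq => /and3P [_ /hasPn /(_ y (mem_head _ _)) /=]; rewrite s1T.
Qed.

Section Feasibility.
Variables (R H : finType) (K : instance R H).
Implicit Types (s : seq (event R H)) (r : R) (h : H) (M : {set R * H}).

Lemma prop_rcons s e x :
  (x \in prop (rcons s e)) =
  (x \in prop s) || (if e is Propose r h then (r, h) == x else false).
Proof. by rewrite /prop !inE -cats1 has_cat /= orbF. Qed.

Lemma rej_rcons s e x :
  (x \in rej (rcons s e)) =
  (x \in rej s) || (if e is Reject r h then (r, h) == x else false).
Proof. by rewrite /rej !inE -cats1 has_cat /= orbF. Qed.

Lemma prop_rcons_reject s r h : prop (rcons s (Reject r h)) = prop s.
Proof. by apply/setP => x; rewrite prop_rcons orbF. Qed.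

Lemma rej_rcons_propose s r h : rej (rcons s (Propose r h)) = rej s.
Proof. by apply/setP => x; rewrite rej_rcons orbF. Qed.

Lemma prop_subset_rcons s e : prop s \subset prop (rcons s e).
Proof. by apply/subsetP => x; rewrite prop_rcons => ->. Qed.

Lemma rej_subset_rcons s e : rej s \subset rej (rcons s e).
Proof. by apply/subsetP => x; rewrite rej_rcons => ->. Qed.

Lemma ousted_subset M M' r h :
  M \subset M' -> ousted K M r h -> ousted K M' r h.
Proof.
have le_cnt L : M \subset M' -> cnt_on h M L <= cnt_on h M' L.
  by move=> sMM'; apply: sub_count => x; rewrite !inE => /(subsetP sMM').
move=> sMM' /and3P [rhM le_q /orP le_q']; apply/and3P; split.
- exact: subsetP rhM.
- exact: leq_trans le_q (le_cnt _ sMM').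
- by case: le_q' => [->|le_q'] //; rewrite (leq_trans le_q' (le_cnt _ sMM')) orbT.
Qed.

Lemma feasible_rej_subset s : feasible K s -> rej s \subset prop s.
Proof.
elim=> [|t r h _ IH _|t r h _ IH cr]; first by apply/subsetP => x; rewrite inE.
  by rewrite rej_rcons_propose (subset_trans IH (prop_subset_rcons _ _)).
rewrite prop_rcons_reject; apply/subsetP => x; rewrite rej_rcons.
by case/orP => [/(subsetP IH) //|/eqP <-]; case/andP: cr => /and3P [].
Qed.

Lemma feasible_prop_pref s r h : feasible K s -> (r, h) \in prop s ->
  h \in prefR K r /\
  all (fun h' => (r, h') \in rej s) (take (index h (prefR K r)) (prefR K r)).
Proof.
elim=> [|t r' h' _ IH cp|t r' h' _ IH _]; first by rewrite inE.
  rewrite prop_rcons rej_rcons_propose => /orP [//|/eqP [<- <-]].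
  by case/and4P: cp.
rewrite prop_rcons_reject => /IH [hr all_rej]; split=> //.
by apply: sub_all all_rej => y /(subsetP (rej_subset_rcons _ _)).
Qed.

Lemma feasible_rej_ousted s r h :
  feasible K s -> (r, h) \in rej s -> ousted K (prop s) r h.
Proof.
elim=> [|t r' h' _ IH _|t r' h' _ IH cr]; first by rewrite inE.
  rewrite rej_rcons_propose => /IH.
  by apply: ousted_subset; apply: prop_subset_rcons.
rewrite prop_rcons_reject rej_rcons => /orP [/IH //|/eqP [<- <-]].
by case/andP: cr.
Qed.

Lemma feasible_rej_before s r h h' :
  feasible K s -> (r, h) \in prop s -> h' \in prefR K r ->
  index h' (prefR K r) < index h (prefR K r) -> (r, h') \in rej s.
Proof.
move=> fs /(feasible_prop_pref fs) [_ /allP all_rej] h'r lt_h'h.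
by apply: all_rej; rewrite in_take.
Qed.

Lemma feasible_tent_functional s r h1 h2 :
  feasible K s -> (r, h1) \in tent s -> (r, h2) \in tent s -> h1 = h2.
Proof.
move=> fs; rewrite !in_setD => /andP [nrej1 prop1] /andP [nrej2 prop2].
have [h1r _] := feasible_prop_pref fs prop1.
have [h2r _] := feasible_prop_pref fs prop2.
case: (ltngtP (index h1 (prefR K r)) (index h2 (prefR K r)))
  => [lt12|lt21|/(index_inj h1 h1r h2r) //].
- by rewrite (feasible_rej_before fs prop2 h1r lt12) in nrej1.
- by rewrite (feasible_rej_before fs prop1 h2r lt21) in nrej2.
Qed.

Lemma maximal_rej s r h :
  maximal_feasible K s -> ousted K (prop s) r h -> (r, h) \in rej s.
Proof.
case=> fs maxs ousted_rh; apply/negPn/negP => nrej.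
by apply: (maxs (Reject r h)); apply: feas_rej; rewrite // /can_reject ousted_rh.
Qed.

Lemma maximal_prop s r h :
  maximal_feasible K s -> h \in prefR K r ->
  all (fun h' => (r, h') \in rej s) (take (index h (prefR K r)) (prefR K r)) ->
  (r, h) \in prop s.
Proof.
case=> fs maxs hr /allP all_rej; apply/negPn/negP => nprop.
have [r_matched|r_free] := boolP (r \in res (tent s)); last first.
  apply: (maxs (Propose r h)); apply: feas_prop => //.
  by rewrite /can_propose r_free nprop hr; apply/allP.
move: r_matched; rewrite inE => /existsP [h'].
rewrite in_setD => /andP [nrej' prop'].
have [h'r _] := feasible_prop_pref fs prop'.
case: (ltngtP (index h' (prefR K r)) (index h (prefR K r)))
  => [lt'|lt'|/(index_inj h' h'r hr) eq'].
- by rewrite all_rej ?in_take in nrej'.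
- have rej_h := feasible_rej_before fs prop' hr lt'.
  by rewrite (subsetP (feasible_rej_subset fs) _ rej_h) in nprop.
- by rewrite -eq' prop' in nprop.
Qed.

End Feasibility.

Section HospitalList.
Variables (R H : finType) (K : instance R H) (s : seq (event R H)) (h : H).
Hypotheses (maxs : maximal_feasible K s)
  (h_complete : forall r, r \in prefH K h) (h_uniq : uniq (prefH K h)).

Local Notation L := (prefH K h).
Local Notation proposers := [seq r <- L | r \in res_h h (prop s)].

Lemma mem_proposers r : (r \in proposers) = ((r, h) \in prop s).
Proof. by rewrite mem_filter h_complete andbT inE. Qed.

(* [index r proposers] is the number of proposers that [h] ranks above [r]. *)
Lemma maximal_rejE r :
  ((r, h) \in rej s) = ((r, h) \in prop s) && (quota K h <= index r proposers).
Proof.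
have fs := maxs.1.
apply/idP/andP => [rej_rh|[prop_rh le_q]].
  have prop_rh := subsetP (feasible_rej_subset fs) _ rej_rh.
  split; rewrite // -count_take_index; last by rewrite inE.
  by case/and3P: (feasible_rej_ousted fs rej_rh) => _ _; rewrite h_complete.
apply: (maximal_rej maxs); rewrite /ousted /cnt_on /= prop_rh h_complete /=.
rewrite count_take_index; last by rewrite inE.
rewrite le_q andbT (leq_trans le_q) // -size_filter index_size //.
Qed.

Lemma res_h_maximal_tent :
  res_h h (tent s) = [set r in take (quota K h) proposers].
Proof.
apply/setP => r; rewrite [in LHS]inE in_setD maximal_rejE inE.
have [prop_rh|nprop_rh] := boolP ((r, h) \in prop s); last first.
  apply/esym/negbTE; apply: contra nprop_rh.
  by move/mem_take; rewrite mem_proposers.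
by rewrite in_take ?mem_proposers // ltnNge andbT.
Qed.

Lemma card_res_h_maximal_tent :
  #|res_h h (tent s)| = minn (quota K h) (size proposers).
Proof.
rewrite res_h_maximal_tent cardsE -size_take_min; apply/card_uniqP.
by rewrite take_uniq ?filter_uniq.
Qed.

Lemma maximal_card_tent_le : #|res_h h (tent s)| <= quota K h.
Proof. by rewrite card_res_h_maximal_tent geq_minl. Qed.

Lemma maximal_card_tent_eq r' :
  (r', h) \in rej s -> #|res_h h (tent s)| = quota K h.
Proof.
rewrite maximal_rejE card_res_h_maximal_tent => /andP [prop_r'h le_q].
by apply/minn_idPl/ltnW; rewrite (leq_ltn_trans le_q) // index_mem mem_proposers.
Qed.

Lemma maximal_tent_precedes_rej r r' :
  (r, h) \in tent s -> (r', h) \in rej s -> precedes L r r'.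
Proof.
move=> tent_rh; rewrite maximal_rejE => /andP [prop_r'h le_q].
have: r \in res_h h (tent s) by rewrite inE.
rewrite res_h_maximal_tent inE => r_first.
have r_proposer := mem_take r_first.
have lt_q : index r proposers < quota K h by rewrite -in_take.
rewrite /precedes h_complete ltnNge; apply/negP => le_idx.
have := leq_count_take (fun x => x \in res_h h (prop s)) L le_idx.
have res_r : r \in res_h h (prop s) by rewrite inE -mem_proposers.
have res_r' : r' \in res_h h (prop s) by rewrite inE.
rewrite !count_take_index // => le_ranks.
by have := leq_ltn_trans (leq_trans le_q le_ranks) lt_q; rewrite ltnn.
Qed.

End HospitalList.

Lemma maximal_feasible_mono (R H : finType) (I J : instance R H)
    (sJ t : seq (event R H)) :
  (forall h, quota J h = quota I h) -> (forall h, prefH J h = prefH I h) ->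
  (forall r, prefix (prefR I r) (prefR J r)) ->
  maximal_feasible J sJ -> feasible I t ->
  prop t \subset prop sJ /\ rej t \subset rej sJ.
Proof.
move=> qJI hJI rJI maxJ.
elim=> [|u r h _ [IHp IHr] cp|u r h _ [IHp IHr] cr].
- by split; apply/subsetP => x; rewrite inE.
- rewrite rej_rcons_propose; split=> //; apply/subsetP => x.
  rewrite prop_rcons => /orP [/(subsetP IHp) //|/eqP <-].
  case/and4P: cp => _ _ hr all_rej; have [s' rJ_def] := prefixP (rJI r).
  apply: (maximal_prop maxJ); first by rewrite rJ_def mem_cat hr.
  rewrite rJ_def take_index_cat //.
  by apply: sub_all all_rej => h'; apply: (subsetP IHr).
- rewrite prop_rcons_reject; split=> //; apply/subsetP => x.
  rewrite rej_rcons => /orP [/(subsetP IHr) //|/eqP <-].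
  apply: (maximal_rej maxJ); case/andP: cr => /(ousted_subset IHp).
  by rewrite /ousted /= hJI qJI.
Qed.

Lemma simple_ext_rej_subset (R H : finType) (I J : instance R H)
    (sI sJ : seq (event R H)) :
  simple_ext I J sI sJ -> feasible I sI -> feasible J sJ ->
  rej sJ \subset prop sI.
Proof.
case=> _ /setP simple fI fJ; apply/subsetP => x rej_x.
apply/negPn/negP => nprop_x.
have := simple x.
rewrite !in_setI !in_setD nprop_x rej_x (subsetP (feasible_rej_subset fJ)) //.
by rewrite (contra (subsetP (feasible_rej_subset fI) x)) // inE.
Qed.

Lemma setU_setD_tent (T : finType) (pI rI pJ rJ : {set T}) :
  pI \subset pJ -> rI \subset rJ -> rJ \subset pI ->
  (pJ :\: pI) :|: ((pI :\: rI) :\: (rJ :\: rI)) = pJ :\: rJ.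
Proof.
move=> /subsetP pIJ /subsetP rIJ /subsetP rJpI; apply/setP => x; rewrite !inE.
move: (pIJ x) (rIJ x) (rJpI x) => /implyP + /implyP + /implyP.
by case: (x \in pI); case: (x \in rI); case: (x \in pJ); case: (x \in rJ).
Qed.

Lemma new_prop_rej_old_prop (R H : finType) (I J : instance R H)
    (sI sJ : seq (event R H)) r h h' :
  resident_minimal I sI -> prefix (prefR I r) (prefR J r) -> feasible J sJ ->
  (r, h) \in prop sJ :\: prop sI -> (r, h') \in prop sI -> (r, h') \in rej sJ.
Proof.
move=> rmin /prefixP [s' rJ_def] fJ.
rewrite in_setD !rmin => /andP [hI prop_h] h'I.
apply: (feasible_rej_before fJ prop_h); first by rewrite rJ_def mem_cat h'I.
by rewrite rJ_def !index_cat h'I (negbTE hI) ltn_addr // index_mem.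
Qed.

Theorem proposition6 (R H : finType) (I J : instance R H)
    (sI sJ : seq (event R H)) :
  wf_instance I -> wf_instance J ->
  maximal_feasible I sI -> maximal_feasible J sJ ->
  resident_minimal I sI -> hospital_complete I ->
  simple_ext I J sI sJ ->
  let P := prop sJ :\: prop sI in
  let X := rej sJ :\: rej sI in
  let Q := P :|: (tent sI :\: X) in
  (P :&: prop sI = set0) /\
      (forall r h1 h2, (r, h1) \in P -> (r, h2) \in P -> h1 = h2) /\
      (X \subset tent sI) /\
      (res P :&: res (tent sI) \subset res X) /\
      (forall h, #|res_h h Q| <= quota I h /\
                 (res_h h X != set0 -> #|res_h h Q| = quota I h)) /\
      (forall h r r', r \in res_h h Q -> r' \in res_h h X ->
                      precedes (prefH I h) r r').
Proof.
move=> _ [_ [_ uniqJ]] maxI maxJ rmin hcI simple P X Q.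
have [[qJI [rJI hJI]] _] := simple.
have {}hJI h : prefH J h = prefH I h.
  exact: complete_prefix_eq (hcI h) (hJI h) (uniqJ h).
have hcJ h r : r \in prefH J h by rewrite hJI.
have [pIJ rIJ] := maximal_feasible_mono qJI hJI rJI maxJ maxI.1.
have rJpI := simple_ext_rej_subset simple maxI.1 maxJ.1.
have QE : Q = tent sJ := setU_setD_tent pIJ rIJ rJpI.
have PJ : P \subset tent sJ by rewrite -QE subsetUl.
split; first by apply/setP => x; rewrite !inE andbC andbA andbN.
split.
  move=> r h1 h2 /(subsetP PJ) + /(subsetP PJ).
  exact: feasible_tent_functional maxJ.1.
split.
  by apply/subsetP => x; rewrite !in_setD => /andP [-> /(subsetP rJpI)].
split.
  apply/subsetP => r; rewrite in_setI !inE.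
  case/andP => /existsP [h Ph] /existsP [h' tent_h'].
  apply/existsP; exists h'; move: tent_h'; rewrite !in_setD => /andP [-> prop_h'].
  by rewrite (new_prop_rej_old_prop rmin (rJI r) maxJ.1 Ph prop_h').
split=> [h|h r r']; rewrite QE -?qJI -?hJI.
  split; first exact: maximal_card_tent_le maxJ (hcJ h) (uniqJ h).
  case/set0Pn => r'; rewrite [_ \in res_h _ _]inE => /setDP [rej_r' _].
  exact (maximal_card_tent_eq maxJ (hcJ h) (uniqJ h) rej_r').
rewrite [r \in _]inE [r' \in _]inE => tent_rh /setDP [rej_r' _].
exact (maximal_tent_precedes_rej maxJ (hcJ h) tent_rh rej_r').
Qed.
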